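(* Let $\alpha_1,\alpha_2,\alpha_3,\alpha_4\in\mathbb{C}$ be pairwise distinct. Let $f:\mathbb{Z}^4\to\mathbb{C}$ be a solution of the discrete potential KdV equation on every elementary square of $\mathbb{Z}^4$, namely $$(f_{i,j}-f)(f_i-f_j)=\alpha_i-\alpha_j\qquad\text{for all } 1\le i<j\le 4,$$ at every vertex. Assume the solution is generic, so that all denominators below are nonzero. Define $$x=\frac{f_1-f_3}{f_2-f_3},\qquad v=\frac{f_1-f_4}{f_2-f_4},$$ $$y=\frac{f_{1,3}-f_{3,4}}{f_{2,3}-f_{3,4}},\qquad u=\frac{f_{1,4}-f_{3,4}}{f_{2,4}-f_{3,4}}.$$ Thus $y$ is the shift of $v$ in direction $3$, and $u$ is the shift of $x$ in direction $4$. Then the following hold. (i) The quantities $x,y,u,v$ are invariant under the three-parameter symmetry group $G$ of the equation, which is generated by $$f\mapsto f+\varepsilon_1,\qquad f\mapsto f\,e^{\varepsilon_2(-1)^{n_1+n_2+n_3+n_4}},\qquad f\mapsto f+\varepsilon_3(-1)^{n_1+n_2+n_3+n_4}.$$ (ii) They are related by the Harrison map: $$u=yQ,\qquad v=xQ^{-1},$$ $$Q=\frac{(1-\gamma_2)+(\gamma_2-\gamma_1)x+\gamma_2(\gamma_1-1)xy}{(1-\gamma_1)+(\gamma_1-\gamma_2)y+\gamma_1(\gamma_2-1)xy},$$ where $$\gamma_1=\frac{\alpha_2-\alpha_3}{\alpha_1-\alpha_3},\qquad \gamma_2=\frac{\alpha_2-\alpha_4}{\alpha_1-\alpha_4}.$$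 (iii) The Harrison map $R(x,y;\gamma_1,\gamma_2)=(yQ,\,xQ^{-1})$ is a Yang–Baxter map, i.e. $$R^{23}(\gamma_2,\gamma_3)R^{13}(\gamma_1,\gamma_3)R^{12}(\gamma_1,\gamma_2)=R^{12}(\gamma_1,\gamma_2)R^{13}(\gamma_1,\gamma_3)R^{23}(\gamma_2,\gamma_3).$$
   Context: Notation: $f=f(n)$, $f_i=f(n+e_i)$, $f_{i,j}=f(n+e_i+e_j)$ for $n=(n_1,\dots,n_4)\in\mathbb{Z}^4$, where $e_i$ are the unit vectors. For a map $R(x,y)=(F(x,y),H(x,y))$ on $\mathbb{X}\times\mathbb{X}$, the map $R^{ij}$ on $\mathbb{X}^3$ acts as $R$ on factors $i<j$, placing $F$ in slot $i$ and $H$ in slot $j$, and as the identity on the remaining factor. It uses the parameters indicated. *)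

From HB Require Import structures.
From mathcomp Require Import all_boot all_order all_algebra.
From mathcomp Require Import complex.
From mathcomp Require Import all_classical all_reals all_analysis.
Set Implicit Arguments. Unset Strict Implicit. Unset Printing Implicit Defensive.
Import Order.TTheory GRing.Theory Num.Theory.
Local Open Scope ring_scope.

Section Defs.
Variable R : realType.
Local Notation C := R[i].

Definition cexp (z : C) : C :=
  let: Complex a b := z in Complex (expR a * cos b) (expR a * sin b).

(* Lattice Z^4; the paper's directions 1,2,3,4 are the ordinals 0,1,2,3. *)
Definition pt := {ffun 'I_4 -> int}.
Definition sh (n : pt) (i : 'I_4) : pt := [ffun k => n k + (k == i)%:Z].
Definition psign (n : pt) : C := (-1) ^ (\sum_(k < 4) n k).

Definition d1 : 'I_4 := inord 0.
Definition d2 : 'I_4 := inord 1.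
Definition d3 : 'I_4 := inord 2.
Definition d4 : 'I_4 := inord 3.

Definition dpKdV (alpha : 'I_4 -> C) (f : pt -> C) : Prop :=
  forall (n : pt) (i j : 'I_4), (i < j)%N ->
    (f (sh (sh n i) j) - f n) * (f (sh n i) - f (sh n j)) = alpha i - alpha j.

Definition xq (f : pt -> C) (n : pt) : C :=
  (f (sh n d1) - f (sh n d3)) / (f (sh n d2) - f (sh n d3)).
Definition vq (f : pt -> C) (n : pt) : C :=
  (f (sh n d1) - f (sh n d4)) / (f (sh n d2) - f (sh n d4)).
Definition yq (f : pt -> C) (n : pt) : C :=
  (f (sh (sh n d1) d3) - f (sh (sh n d3) d4)) /
  (f (sh (sh n d2) d3) - f (sh (sh n d3) d4)).
Definition uq (f : pt -> C) (n : pt) : C :=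
  (f (sh (sh n d1) d4) - f (sh (sh n d3) d4)) /
  (f (sh (sh n d2) d4) - f (sh (sh n d3) d4)).

Definition gen1 (e : C) (f : pt -> C) : pt -> C := fun n => f n + e.
Definition gen2 (e : C) (f : pt -> C) : pt -> C := fun n => f n * cexp (e * psign n).
Definition gen3 (e : C) (f : pt -> C) : pt -> C := fun n => f n + e * psign n.

Inductive inG : ((pt -> C) -> (pt -> C)) -> Prop :=
  | inG_id : inG id
  | inG_gen1 e : inG (gen1 e)
  | inG_gen2 e : inG (gen2 e)
  | inG_gen3 e : inG (gen3 e)
  | inG_comp g h : inG g -> inG h -> inG (g \o h).

Definition Qnum (g1 g2 x y : C) : C := (1 - g2) + (g2 - g1) * x + g2 * (g1 - 1) * x * y.
Definition Qden (g1 g2 x y : C) : C := (1 - g1) + (g1 - g2) * y + g1 * (g2 - 1) * x * y.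
Definition Qh (g1 g2 x y : C) : C := Qnum g1 g2 x y / Qden g1 g2 x y.

(* R(x,y;g1,g2) = (y Q, x Q^-1), as a partial map: undefined (None) where
   a denominator (of Q or of Q^-1) vanishes *)
Definition harrison (g1 g2 : C) (p : C * C) : option (C * C) :=
  let: (x, y) := p in
  if (Qnum g1 g2 x y != 0) && (Qden g1 g2 x y != 0)
  then Some (y * Qh g1 g2 x y, x * (Qh g1 g2 x y)^-1) else None.

Definition R12 (g1 g2 : C) (t : C * C * C) : option (C * C * C) :=
  let: (a, b, c) := t in omap (fun p => (p.1, p.2, c)) (harrison g1 g2 (a, b)).
Definition R13 (g1 g2 : C) (t : C * C * C) : option (C * C * C) :=
  let: (a, b, c) := t in omap (fun p => (p.1, b, p.2)) (harrison g1 g2 (a, c)).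
Definition R23 (g1 g2 : C) (t : C * C * C) : option (C * C * C) :=
  let: (a, b, c) := t in omap (fun p => (a, p.1, p.2)) (harrison g1 g2 (b, c)).

End Defs.

From HB Require Import structures.
From mathcomp Require Import all_boot all_order all_algebra.
From mathcomp Require Import complex.
From mathcomp Require Import all_classical all_reals all_analysis.
From mathcomp Require Import ring.
Import Order.TTheory GRing.Theory Num.Theory.
Local Open Scope ring_scope.

(* (i): every generator of G acts, on the vertices of one parity class of Z^4, by
   an affine map w |-> l w + m, and each of x, y, u, v is a ratio (a - c) / (b - c)
   of values of f at vertices of a single parity class.
   (ii): the equation gives f at n + e_i + e_j in terms of f, f_i and f_j; after
   substitution, u = y Q and v = x / Q are rational identities in f, f_1, ..., f_4
   and the alpha_i.
   (iii): the Harrison map has the shape (x, y) |-> (y Q, x / Q), so the Yang-Baxter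
   equation reduces to two identities between the multipliers Q of the six steps.
   Once the multipliers of the two middle R13 steps are put in closed form, both are
   rational identities in x, y, z and the parameters. *)

Ltac nonzero_up_to_ring :=
  repeat (apply/andP; split);
  match goal with
  | |- is_true (?p != 0) =>
      match goal with h : is_true (?q != 0) |- _ => by have -> : p = q by ring end
  end.

Lemma divf_cleared {K : fieldType} {k c n d n' d' : K} :
  c != 0 -> d != 0 -> n * c = k * n' -> d * c = k * d' ->
  [/\ d' != 0, (n' != 0) = (n != 0) & n / d = n' / d'].
Proof.
move=> c0 d0 nE dE.
have : k * d' != 0 by rewrite -dE mulf_neq0.
rewrite mulf_eq0 negb_or => /andP[k0 d'0].
have n'E : n' = n * c / k by rewrite nE mulrAC divff ?mul1r.
have d'E : d' = d * c / k by rewrite dE mulrAC divff ?mul1r.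
split=> //; first by rewrite n'E !mulf_eq0 invr_eq0 (negbTE c0) (negbTE k0) !orbF.
by rewrite n'E d'E; field; rewrite c0 d0 k0.
Qed.

Lemma inj_subr_neq0 {k : nat} {V : zmodType} {a : 'I_k -> V} {i j : 'I_k} :
  injective a -> (i < j)%N -> a i - a j != 0.
Proof.
by move=> a_inj ij; rewrite subr_eq0 (inj_eq a_inj); apply: contraTneq ij => ->; rewrite ltnn.
Qed.

Lemma inord_lt (i j : nat) : (i < j < 4)%N -> (@inord 3 i < @inord 3 j)%N.
Proof. by case/andP=> ij j4; rewrite !inordK // (ltn_trans ij j4). Qed.

(* The two sides of the Yang-Baxter equation for a map (x, y) |-> (y p, x / p):
   p1, p2, p3 are the multipliers of R12, R13, R23 on the left, and q1, q2, q3
   those of R23, R13, R12 on the right. *)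
Lemma exchange_yang_baxter {K : fieldType} (x y z p1 p2 p3 q1 q2 q3 : K) :
  p2 = q1 * q3 -> p1 * p3 = q2 ->
  (z * p2, y * p1 / p2 * p3, x / p1 / p3) = (z * q1 * q3, y / q1 * q2 / q3, x / q2).
Proof. by move=> -> <-; rewrite !invfM; congr (_, _, _); ring. Qed.

Section Harrison.
Set Implicit Arguments.
Unset Strict Implicit.

Variable R : realType.
Local Notation C := R[i].

Lemma psign_sh (n : pt) (i : 'I_4) : psign R (sh n i) = - psign R n.
Proof.
have sum_delta : \sum_(k < 4) (k == i)%:Z = 1.
  by rewrite (bigD1 i) //= eqxx big1 ?addr0 // => k /negbTE ->.
rewrite /psign /sh; under eq_bigr do rewrite ffunE.
by rewrite big_split /= sum_delta exprzDr ?unitrN1 // expr1z mulrN1.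
Qed.

Lemma cexp_neq0 (z : C) : cexp z != 0.
Proof.
case: z => a b; apply/eqP => -[] /eqP; rewrite mulf_eq0 gt_eqF ?expR_gt0 //=.
move=> /eqP c0 /eqP; rewrite mulf_eq0 gt_eqF ?expR_gt0 //= => /eqP s0.
by have := cos2Dsin2 b; rewrite c0 s0 expr0n addr0 => /eqP; rewrite eq_sym oner_eq0.
Qed.

Lemma inG_affine g (s : C) : inG g ->
  exists l m : C, l != 0 /\ forall f n, psign R n = s -> g f n = l * f n + m.
Proof.
elim=> {g} [|e|e|e|g h _ [lg [mg [lg0 gE]]] _ [lh [mh [lh0 hE]]]].
- by exists 1, 0; split=> // f n _; rewrite mul1r addr0.
- by exists 1, e; split=> // f n _; rewrite mul1r.
- exists (cexp (e * s)), 0; split=> [|f n ns]; first exact: cexp_neq0.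
  by rewrite /gen2 ns mulrC addr0.
- by exists 1, (e * s); split=> // f n ns; rewrite /gen3 ns mul1r.
- exists (lg * lh), (lg * mh + mg); split=> [|f n ns]; first exact: mulf_neq0.
  by rewrite /= gE // hE //; ring.
Qed.

Lemma affine_ratio (l m a b c : C) : l != 0 ->
  (l * a + m - (l * c + m)) / (l * b + m - (l * c + m)) = (a - c) / (b - c).
Proof.
move=> l0; have lin w w' : l * w + m - (l * w' + m) = l * (w - w') by ring.
by rewrite !lin invfM mulrACA divff // mul1r.
Qed.

Lemma harrison_vars_invariant (g : (pt -> C) -> pt -> C) (f : pt -> C) (n : pt) :
  inG g ->
  [/\ xq (g f) n = xq f n, yq (g f) n = yq f n,
      uq (g f) n = uq f n & vq (g f) n = vq f n].
Proof.
move=> gG.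
have psign_sh2 i j : psign R (sh (sh n i) j) = psign R n by rewrite !psign_sh opprK.
have [l [m [l0 gE]]] := inG_affine (- psign R n) gG.
have [l' [m' [l'0 gE']]] := inG_affine (psign R n) gG.
split.
- by rewrite /xq !gE ?psign_sh // affine_ratio.
- by rewrite /yq !gE' ?psign_sh2 // affine_ratio.
- by rewrite /uq !gE' ?psign_sh2 // affine_ratio.
- by rewrite /vq !gE ?psign_sh // affine_ratio.
Qed.

Lemma dpKdV_corner (alpha : 'I_4 -> C) (f : pt -> C) (n : pt) (i j : 'I_4) :
  injective alpha -> dpKdV alpha f -> (i < j)%N ->
  f (sh n i) - f (sh n j) != 0 /\
  f (sh (sh n i) j) = f n + (alpha i - alpha j) / (f (sh n i) - f (sh n j)).
Proof.
move=> alpha_inj kdv ij; have kdv_ij := kdv n i j ij.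
have a_ij := inj_subr_neq0 alpha_inj ij.
have f_ij : f (sh n i) - f (sh n j) != 0.
  by apply: contraNneq a_ij => f_ij0; rewrite -kdv_ij f_ij0 mulr0.
by split=> //; rewrite -kdv_ij mulfK // addrC subrK.
Qed.

Lemma harrison_relation_cleared (alpha : 'I_4 -> C) (f : pt -> C) (n : pt) :
  injective alpha -> dpKdV alpha f ->
  f (sh (sh n d2) d3) - f (sh (sh n d3) d4) != 0 ->
  let g1 := (alpha d2 - alpha d3) / (alpha d1 - alpha d3) in
  let g2 := (alpha d2 - alpha d4) / (alpha d1 - alpha d4) in
  uq f n * Qden g1 g2 (xq f n) (yq f n) = yq f n * Qnum g1 g2 (xq f n) (yq f n) /\
  vq f n * Qnum g1 g2 (xq f n) (yq f n) = xq f n * Qden g1 g2 (xq f n) (yq f n).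
Proof.
move=> alpha_inj kdv generic g1 g2.
have [f13 f13E] := dpKdV_corner n alpha_inj kdv (inord_lt 0 2 isT).
have [f14 f14E] := dpKdV_corner n alpha_inj kdv (inord_lt 0 3 isT).
have [f23 f23E] := dpKdV_corner n alpha_inj kdv (inord_lt 1 2 isT).
have [f24 f24E] := dpKdV_corner n alpha_inj kdv (inord_lt 1 3 isT).
have [f34 f34E] := dpKdV_corner n alpha_inj kdv (inord_lt 2 3 isT).
have a13 := inj_subr_neq0 alpha_inj (inord_lt 0 2 isT).
have a14 := inj_subr_neq0 alpha_inj (inord_lt 0 3 isT).
have D234 : (alpha d2 - alpha d3) * (f (sh n d3) - f (sh n d4))
          - (alpha d3 - alpha d4) * (f (sh n d2) - f (sh n d3)) != 0.
  apply: contraNneq generic => D0; rewrite f23E f34E.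
  apply/eqP/(mulIf (mulf_neq0 f23 f34)); rewrite mul0r -D0.
  by field; nonzero_up_to_ring.
rewrite /xq /yq /uq /vq f13E f14E f23E f24E f34E /g1 /g2 /Qnum /Qden.
by split; field; nonzero_up_to_ring.
Qed.

Lemma harrison_relation (alpha : 'I_4 -> C) (f : pt -> C) (n : pt) :
  injective alpha -> dpKdV alpha f ->
  f (sh (sh n d2) d3) - f (sh (sh n d3) d4) != 0 ->
  let g1 := (alpha d2 - alpha d3) / (alpha d1 - alpha d3) in
  let g2 := (alpha d2 - alpha d4) / (alpha d1 - alpha d4) in
  Qnum g1 g2 (xq f n) (yq f n) != 0 -> Qden g1 g2 (xq f n) (yq f n) != 0 ->
  uq f n = yq f n * Qh g1 g2 (xq f n) (yq f n) /\
  vq f n = xq f n * (Qh g1 g2 (xq f n) (yq f n))^-1.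
Proof.
move=> alpha_inj kdv generic g1 g2 N0 D0.
have [uE vE] := harrison_relation_cleared alpha_inj kdv generic.
split; first by rewrite -[LHS](mulfK D0) uE mulrA.
by rewrite invf_div -[LHS](mulfK N0) vE mulrA.
Qed.

Lemma harrisonP (g1 g2 x y : C) (p : C * C) : harrison g1 g2 (x, y) = Some p ->
  [/\ Qnum g1 g2 x y != 0, Qden g1 g2 x y != 0 &
      p = (y * Qh g1 g2 x y, x * (Qh g1 g2 x y)^-1)].
Proof. by rewrite /harrison; case: ifP => // /andP[N0 D0] [<-]. Qed.

Section YangBaxter.
Variables g1 g2 g3 x y z : C.

Local Notation Q12 := (Qh g1 g2 x y).
Local Notation Q23 := (Qh g2 g3 y z).

Definition lhs13_num : C :=
  x*y^+2*z*g1*g2*g3 - x*y^+2*z*g2*g3 - x*y^+2*g1*g2 + x*y^+2*g2*g3 - x*y*z*g1*g3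
  + x*y*z*g2*g3 + x*y*g1 - x*y*g2*g3 - y*z*g2*g3 + y*z*g3 + y*g2 - y*g3 + g3 - 1.
Definition lhs13_den : C :=
  x*y^+2*z*g1*g2*g3 - x*y^+2*z*g1*g2 + x*y*z*g1*g2 - x*y*z*g1*g3 - x*y*g1*g2
  + x*y*g1 + y*z*g1 - y*z*g2*g3 - y*g1 + y*g2 - z*g1 + z*g3 + g1 - 1.
Definition rhs13_num : C :=
  x*y^+2*z*g1*g2*g3 - x*y^+2*z*g2*g3 - x*y*z*g1*g3 + x*y*z*g2*g3 - x*y*g1*g2
  + x*y*g3 + x*g1 - x*g3 - y*z*g2*g3 + y*z*g3 + y*g2 - y*g3 + g3 - 1.
Definition rhs13_den : C :=
  x*y^+2*z*g1*g2*g3 - x*y^+2*z*g1*g2 + x*y*z*g1*g2 - x*y*z*g1*g3 - x*y*g1*g2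
  + x*y*g1 + y^+2*z*g1*g2 - y^+2*z*g2*g3 - y*z*g1*g2 + y*z*g3 - y*g1 + y*g2 + g1 - 1.

Lemma Qh_lhs13E :
  Qden g1 g2 x y != 0 -> Qnum g1 g3 (y * Q12) z != 0 -> Qden g1 g3 (y * Q12) z != 0 ->
  [/\ lhs13_num != 0, lhs13_den != 0 & Qh g1 g3 (y * Q12) z = lhs13_num / lhs13_den].
Proof.
move=> D12 N13 D13.
have [numE denE] : Qnum g1 g3 (y * Q12) z * Qden g1 g2 x y = (g1 - 1) * lhs13_num /\
                   Qden g1 g3 (y * Q12) z * Qden g1 g2 x y = (g1 - 1) * lhs13_den.
  by move: D12; rewrite /Qh /Qnum /Qden /lhs13_num /lhs13_den => D12; split; field.
have [B0 A0 QE] := divf_cleared D12 D13 numE denE.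
by split; rewrite // A0.
Qed.

Lemma Qh_rhs13E : Qnum g2 g3 y z != 0 -> Qden g2 g3 y z != 0 ->
  Qden g1 g3 x (y * Q23^-1) != 0 ->
  rhs13_den != 0 /\ Qh g1 g3 x (y * Q23^-1) = rhs13_num / rhs13_den.
Proof.
move=> N23 D23 D13.
have [numE denE] : Qnum g1 g3 x (y * Q23^-1) * Qnum g2 g3 y z = (g3 - 1) * rhs13_num /\
                   Qden g1 g3 x (y * Q23^-1) * Qnum g2 g3 y z = (g3 - 1) * rhs13_den.
  move: N23 D23; rewrite /Qh /Qnum /Qden /rhs13_num /rhs13_den => N23 D23.
  by split; field; nonzero_up_to_ring.
by have [E0 _ QE] := divf_cleared N23 D13 numE denE.
Qed.

Lemma yang_baxter_first_entry :
  Qnum g2 g3 y z != 0 -> Qden g2 g3 y z != 0 -> rhs13_den != 0 -> lhs13_den != 0 ->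
  Qden g1 g2 (y * Q23^-1 * (rhs13_num / rhs13_den)) (z * Q23) != 0 ->
  lhs13_num / lhs13_den = Q23 * Qh g1 g2 (y * Q23^-1 * (rhs13_num / rhs13_den)) (z * Q23).
Proof.
move=> N23 D23 E0 B0 D6; rewrite {2}/Qh mulf_div; apply/eqP.
rewrite eqr_div ?mulf_neq0 //; apply/eqP.
move: N23 D23 E0; rewrite /Qh /Qnum /Qden /lhs13_num /lhs13_den /rhs13_num /rhs13_den.
by move=> N23 D23 E0; field; nonzero_up_to_ring.
Qed.

Lemma yang_baxter_last_entry :
  Qnum g1 g2 x y != 0 -> Qden g1 g2 x y != 0 -> lhs13_num != 0 -> lhs13_den != 0 ->
  rhs13_den != 0 ->
  Qden g2 g3 (x * Q12^-1) (y * Q12 * (lhs13_num / lhs13_den)^-1) != 0 ->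
  Q12 * Qh g2 g3 (x * Q12^-1) (y * Q12 * (lhs13_num / lhs13_den)^-1) = rhs13_num / rhs13_den.
Proof.
move=> N12 D12 A0 B0 E0 D3; rewrite {2}/Qh mulf_div; apply/eqP.
rewrite eqr_div ?mulf_neq0 //; apply/eqP.
move: N12 D12 A0 B0; rewrite /Qh /Qnum /Qden /lhs13_num /lhs13_den /rhs13_num /rhs13_den.
by move=> N12 D12 A0 B0; field; nonzero_up_to_ring.
Qed.

End YangBaxter.

Local Arguments harrison : simpl never.

Lemma harrison_yang_baxter (g1 g2 g3 : C) (t l r : C * C * C) :
  obind (R23 g2 g3) (obind (R13 g1 g3) (R12 g1 g2 t)) = Some l ->
  obind (R12 g1 g2) (obind (R13 g1 g3) (R23 g2 g3 t)) = Some r ->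
  l = r.
Proof.
case: t => [[x y] z]; rewrite /R12 /R13 /R23 /=.
case h1: (harrison g1 g2 (x, y)) => [[a1 b1]|] //=.
case h2: (harrison g1 g3 (a1, z)) => [[a2 c2]|] //=.
case h3: (harrison g2 g3 (b1, c2)) => [[b3 c3]|] //= [<-].
case h4: (harrison g2 g3 (y, z)) => [[q1 r1]|] //=.
case h5: (harrison g1 g3 (x, r1)) => [[p2 r2]|] //=.
case h6: (harrison g1 g2 (p2, q1)) => [[p3 q3]|] //= [<-].
move: h1 h2 h3 h4 h5 h6.
move=> /harrisonP[N12 D12 [-> ->]] /harrisonP[N2 D2 [-> ->]] /harrisonP[N3 D3 [-> ->]].
move=> /harrisonP[N23 D23 [-> ->]] /harrisonP[N5 D5 [-> ->]] /harrisonP[N6 D6 [-> ->]].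
have [A0 B0 Q2E] := Qh_lhs13E D12 N2 D2.
have [E0 Q5E] := Qh_rhs13E N23 D23 D5.
apply: exchange_yang_baxter.
- by rewrite Q5E in D6 *; rewrite Q2E; apply: yang_baxter_first_entry.
- by rewrite Q2E in D3 *; rewrite Q5E; apply: yang_baxter_last_entry.
Qed.

End Harrison.

Theorem mainTheorem2 (R : realType) (alpha : 'I_4 -> R[i]) (f : pt -> R[i]) :
  injective alpha ->
  dpKdV alpha f ->
  (* genericity: all denominators are nonzero, at every vertex *)
  (forall n : pt,
     [/\ f (sh n d2) - f (sh n d3) != 0, f (sh n d2) - f (sh n d4) != 0,
         f (sh (sh n d2) d3) - f (sh (sh n d3) d4) != 0 &
         f (sh (sh n d2) d4) - f (sh (sh n d3) d4) != 0]) ->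
  (let g1 := (alpha d2 - alpha d3) / (alpha d1 - alpha d3) in
   let g2 := (alpha d2 - alpha d4) / (alpha d1 - alpha d4) in
   forall n : pt, Qnum g1 g2 (xq f n) (yq f n) != 0 /\ Qden g1 g2 (xq f n) (yq f n) != 0) ->
  (* (i) invariance under the symmetry group G *)
  (forall g, inG g -> forall n : pt,
     [/\ xq (g f) n = xq f n, yq (g f) n = yq f n,
         uq (g f) n = uq f n & vq (g f) n = vq f n])
  /\
  (* (ii) relation by the Harrison map *)
  (let g1 := (alpha d2 - alpha d3) / (alpha d1 - alpha d3) in
   let g2 := (alpha d2 - alpha d4) / (alpha d1 - alpha d4) in
   forall n : pt,
     uq f n = yq f n * Qh g1 g2 (xq f n) (yq f n) /\
     vq f n = xq f n * (Qh g1 g2 (xq f n) (yq f n))^-1)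
  /\
  (* (iii) the Harrison map is a Yang-Baxter map *)
  (forall (g1 g2 g3 : R[i]) (t l r : R[i] * R[i] * R[i]),
     obind (R23 g2 g3) (obind (R13 g1 g3) (R12 g1 g2 t)) = Some l ->
     obind (R12 g1 g2) (obind (R13 g1 g3) (R23 g2 g3 t)) = Some r ->
     l = r).
Proof.
move=> alpha_inj kdv generic Q_n0; split; [|split].
- by move=> g gG n; apply: harrison_vars_invariant.
- move=> g1 g2 n; have [N0 D0] := Q_n0 n; have [_ _ gen23 _] := generic n.
  exact: harrison_relation.
- exact: harrison_yang_baxter.
Qed.
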